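(* For integers $r,k\ge0$ and real $\alpha$ with $\alpha>k>r$, $$\sum_{n=1}^\infty\frac{H_{n+\alpha}^{(2)}}{(n+r)(n+k)}=\frac1{k-r}\Bigg\{(r-\alpha)\sum_{j=1}^r\frac{H_{\alpha+j-r}^{(2)}}{j(\alpha+j-r)}-(k-\alpha)\sum_{j=1}^k\frac{H_{\alpha+j-k}^{(2)}}{j(\alpha+j-k)}-\sum_{j=1}^{k-r}\frac{H_{\alpha+j-k}}{(\alpha+j-k)^2}$$ $$+2H_{\alpha-r}^{(3)}+H_{\alpha-k}\zeta(2)+2H_{\alpha-r}H_{\alpha-r}^{(2)}-2H_{\alpha-k}^{(3)}-H_{\alpha-r}\zeta(2)-2H_{\alpha-k}H_{\alpha-k}^{(2)}\Bigg\}.$$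
   Context: Shifted harmonic numbers: for a real $\alpha$ that is not a negative integer, $H_\alpha := \sum_{k=1}^\infty\left(\frac1k-\frac1{k+\alpha}\right)$ and, for integers $m\ge 2$, $H_\alpha^{(m)} := \sum_{k=1}^\infty\left(\frac1{k^m}-\frac1{(k+\alpha)^m}\right)=\zeta(m)-\zeta(m,\alpha+1)$, where $\zeta$ is the Riemann zeta function and $\zeta(s,\alpha+1)=\sum_{n=1}^\infty (n+\alpha)^{-s}$ is the Hurwitz zeta function. Empty sums are $0$. *)

From Stdlib Require Import Reals ClassicalEpsilon.
Open Scope R_scope.

(* The sum of a convergent series  sum_{k>=0} f k  (Stdlib's [infinite_sum]);
   chosen by classical epsilon, meaningful whenever the series converges. *)
Definition series (f : nat -> R) : R :=
  epsilon (inhabits 0) (fun l => infinite_sum f l).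

Definition H (a : R) : R :=
  series (fun k => / INR (S k) - / (INR (S k) + a)).

Definition Hm (m : nat) (a : R) : R :=
  series (fun k => / (INR (S k)) ^ m - / (INR (S k) + a) ^ m).

Definition zeta (m : nat) : R := series (fun k => / (INR (S k)) ^ m).

Fixpoint sum1 (n : nat) (f : nat -> R) : R :=
  match n with
  | O => 0
  | S m => sum1 m f + f (S m)
  end.

From Stdlib Require Import Reals Lra Lia ClassicalEpsilon FunctionalExtensionality.
From Coquelicot Require Import Coquelicot.
Open Scope R_scope.

(* Since 1/((n+r)(n+k)) = 1/(k-r) * sum_{m=r}^{k-1} 1/((n+m)(n+m+1)), it suffices to
   evaluate sum_n H^(2)_{n+alpha} / ((n+m)(n+m+1)), a tail of the series
   sum_{n>=1} H^(2)_{n+x} / (n(n+1)) with x = alpha - m.  Summation by parts, using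
   H^(2)_{y+1} = H^(2)_y + 1/(y+1)^2, reduces the latter to H^(2)_x + sum_n 1/(n(n+x)^2),
   and partial fractions evaluate this through H_x, zeta(2) and H^(2)_x.  The values
   obtained for consecutive m are the successive differences of the bracket of the
   theorem viewed as a function of k, so the sum over m telescopes. *)

Lemma infinite_sum_ext f g l :
  (forall n, f n = g n) -> infinite_sum f l -> infinite_sum g l.
Proof. rewrite <- !is_series_Reals. exact (is_series_ext f g l). Qed.

Lemma infinite_sum_plus f g a b :
  infinite_sum f a -> infinite_sum g b -> infinite_sum (fun n => f n + g n) (a + b).
Proof. rewrite <- !is_series_Reals. exact (is_series_plus f g a b). Qed.

Lemma infinite_sum_minus f g a b :
  infinite_sum f a -> infinite_sum g b -> infinite_sum (fun n => f n - g n) (a - b).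
Proof. rewrite <- !is_series_Reals. exact (is_series_minus f g a b). Qed.

Lemma infinite_sum_scal c f a :
  infinite_sum f a -> infinite_sum (fun n => c * f n) (c * a).
Proof. rewrite <- !is_series_Reals. exact (is_series_scal c f a). Qed.

Lemma infinite_sum_shift f a :
  infinite_sum f a -> infinite_sum (fun n => f (S n)) (a - f O).
Proof.
  rewrite <- !is_series_Reals. intros Ha. apply is_series_incr_1.
  replace (plus _ _) with a by (unfold plus; simpl; ring). exact Ha.
Qed.

Lemma Un_cv_const c : Un_cv (fun _ => c) c.
Proof. apply is_lim_seq_Reals, is_lim_seq_const. Qed.

Lemma infinite_sum_zero : infinite_sum (fun _ => 0) 0.
Proof.
  apply (Un_cv_ext (fun _ => 0)); [intros n; rewrite sum_cte; ring | apply Un_cv_const].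
Qed.

Lemma infinite_sum_le f g a b :
  (forall n, f n <= g n) -> infinite_sum f a -> infinite_sum g b -> a <= b.
Proof. intros Hfg. apply Rle_cv_lim. intros n. apply sum_Rle. auto. Qed.

Lemma infinite_sum_telescoping g l :
  Un_cv g l -> infinite_sum (fun n => g n - g (S n)) (g O - l).
Proof.
  intros Hg.
  apply (Un_cv_ext (fun n => g O - g (n + 1)%nat)).
  - intros n. rewrite Nat.add_1_r.
    induction n as [|n IH]; simpl; [ring | rewrite <- IH; ring].
  - apply CV_minus; [apply Un_cv_const | exact (CV_shift' g 1 l Hg)].
Qed.

Lemma Un_cv_inv_INR_plus c : Un_cv (fun n => / (INR n + c)) 0.
Proof.
  apply is_lim_seq_Reals, (is_lim_seq_inv _ p_infty); [|discriminate].
  eapply is_lim_seq_plus; [apply is_lim_seq_INR | apply is_lim_seq_const | reflexivity].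
Qed.

Lemma Un_cv_inv_pow_INR_plus c p : (0 < p)%nat -> Un_cv (fun n => / (INR n + c) ^ p) 0.
Proof.
  intros Hp. rewrite <- (pow_i p Hp).
  apply (Un_cv_ext (fun n => (/ (INR n + c)) ^ p)); [intros n; apply pow_inv|].
  apply (continuity_seq (fun y => y ^ p)).
  - apply derivable_continuous_pt, derivable_pt_pow.
  - apply Un_cv_inv_INR_plus.
Qed.

Lemma Un_cv_bounded_mul_null u v M :
  (forall n, Rabs (u n) <= M) -> Un_cv v 0 -> Un_cv (fun n => u n * v n) 0.
Proof.
  rewrite <- !is_lim_seq_Reals. intros Hu Hv.
  apply is_lim_seq_abs_0.
  apply (is_lim_seq_le_le (fun _ => 0) _ (fun n => M * Rabs (v n))).
  - intros n. rewrite Rabs_mult. split; [apply Rmult_le_pos; apply Rabs_pos|].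
    apply Rmult_le_compat_r; [apply Rabs_pos | apply Hu].
  - apply is_lim_seq_const.
  - replace (Finite 0) with (Finite (M * 0)) by (f_equal; ring).
    apply is_lim_seq_mult'; [apply is_lim_seq_const|].
    now apply is_lim_seq_abs_0 in Hv.
Qed.

Lemma sum1_ext m f g :
  (forall j, (1 <= j <= m)%nat -> f j = g j) -> sum1 m f = sum1 m g.
Proof.
  induction m as [|m IH]; intros Hfg; simpl; [reflexivity|].
  rewrite IH, Hfg; [reflexivity | lia | intros j Hj; apply Hfg; lia].
Qed.

Lemma sum1_succ_l m f : sum1 (S m) f = f 1%nat + sum1 m (fun j => f (S j)).
Proof. induction m as [|m IH]; [simpl; ring | cbn [sum1] in *; rewrite IH; ring]. Qed.

Lemma sum1_add n m f : sum1 (n + m) f = sum1 n f + sum1 m (fun j => f (n + j)%nat).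
Proof.
  induction m as [|m IH]; simpl; [rewrite Nat.add_0_r; ring|].
  rewrite Nat.add_succ_r. simpl. rewrite IH. ring.
Qed.

Lemma infinite_sum_drop u L m :
  infinite_sum (fun n => u (S n)) L ->
  infinite_sum (fun n => u (S (n + m))) (L - sum1 m u).
Proof.
  intros HL. induction m as [|m IH].
  - replace (L - sum1 0 u) with L by (simpl; ring).
    revert HL. apply infinite_sum_ext. intros n. now rewrite Nat.add_0_r.
  - replace (L - sum1 (S m) u) with (L - sum1 m u - u (S (0 + m))) by (simpl; ring).
    apply infinite_sum_shift in IH. revert IH.
    apply infinite_sum_ext. intros n. now rewrite Nat.add_succ_r.
Qed.

Lemma INR_S_ge_1 k : 1 <= INR (S k).
Proof. rewrite S_INR. pose proof (pos_INR k). lra. Qed.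

Lemma inv_sqr_le_twice_diff_inv x : 1 <= x -> / x ^ 2 <= 2 * (/ x - / (x + 1)).
Proof.
  intros Hx.
  assert (Hgap : 2 * (/ x - / (x + 1)) - / x ^ 2 = (x - 1) / (x ^ 2 * (x + 1)))
    by (field; lra).
  assert (0 <= (x - 1) / (x ^ 2 * (x + 1))) by (apply Rdiv_le_0_compat; nra).
  lra.
Qed.

Lemma ex_infinite_sum_dominated_inv_sqr f C :
  0 <= C -> (forall k, 0 <= f k <= C / INR (S k) ^ 2) ->
  exists l, infinite_sum f l.
Proof.
  intros HC Hf.
  assert (Htel : infinite_sum (fun k => / INR (S k) - / INR (S (S k))) (/ INR 1 - 0)).
  { apply (infinite_sum_telescoping (fun k => / INR (S k))).
    apply (Un_cv_ext (fun n => / (INR n + 1))); [intros n; now rewrite S_INR|].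
    apply Un_cv_inv_INR_plus. }
  destruct (Rseries_CV_comp f (fun k => C * 2 * (/ INR (S k) - / INR (S (S k))))) as [l Hl].
  - intros k. split; [apply Hf|].
    apply Rle_trans with (C / INR (S k) ^ 2); [apply Hf|].
    rewrite Rmult_assoc. unfold Rdiv. apply Rmult_le_compat_l; [exact HC|].
    rewrite (S_INR (S k)). apply inv_sqr_le_twice_diff_inv, INR_S_ge_1.
  - exists (C * (2 * (/ INR 1 - 0))).
    apply (infinite_sum_ext (fun k => C * (2 * (/ INR (S k) - / INR (S (S k)))))).
    + intros k. ring.
    + now apply infinite_sum_scal, infinite_sum_scal.
  - now exists l.
Qed.

Lemma ex_infinite_sum_inv_pow p a :
  (2 <= p)%nat -> 0 <= a -> exists l, infinite_sum (fun k => / (INR (S k) + a) ^ p) l.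
Proof.
  intros Hp Ha. apply (ex_infinite_sum_dominated_inv_sqr _ 1); [lra|].
  intros k. pose proof (INR_S_ge_1 k).
  split; [left; apply Rinv_0_lt_compat, pow_lt; lra|].
  unfold Rdiv. rewrite Rmult_1_l. apply Rinv_le_contravar; [apply pow_lt; lra|].
  apply Rle_trans with ((INR (S k) + a) ^ 2); [apply pow_incr; lra|].
  apply Rle_pow; [lra | exact Hp].
Qed.

Lemma series_spec f : (exists l, infinite_sum f l) -> infinite_sum f (series f).
Proof. apply epsilon_spec. Qed.

Lemma zeta_spec p : (2 <= p)%nat -> infinite_sum (fun k => / INR (S k) ^ p) (zeta p).
Proof.
  intros Hp. apply series_spec.
  destruct (ex_infinite_sum_inv_pow p 0 Hp (Rle_refl 0)) as [l Hl].
  exists l. revert Hl. apply infinite_sum_ext. intros k. now rewrite Rplus_0_r.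
Qed.

Lemma ex_infinite_sum_Hm p a :
  (1 <= p)%nat -> 0 <= a ->
  exists l, infinite_sum (fun k => / INR (S k) ^ p - / (INR (S k) + a) ^ p) l.
Proof.
  intros Hp Ha. destruct (Nat.eq_dec p 1) as [->|Hp2].
  - apply (ex_infinite_sum_dominated_inv_sqr _ a Ha).
    intros k. pose proof (INR_S_ge_1 k). rewrite !pow_1.
    replace (/ INR (S k) - / (INR (S k) + a)) with (a / (INR (S k) * (INR (S k) + a)))
      by (field; lra).
    split; [apply Rdiv_le_0_compat; nra|].
    unfold Rdiv. apply Rmult_le_compat_l; [exact Ha|].
    apply Rinv_le_contravar; nra.
  - destruct (ex_infinite_sum_inv_pow p a) as [l Hl]; [lia | exact Ha|].
    exists (zeta p - l). apply infinite_sum_minus; [apply zeta_spec; lia | exact Hl].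
Qed.

Lemma Hm_spec p a :
  (1 <= p)%nat -> 0 <= a ->
  infinite_sum (fun k => / INR (S k) ^ p - / (INR (S k) + a) ^ p) (Hm p a).
Proof. intros Hp Ha. exact (series_spec _ (ex_infinite_sum_Hm p a Hp Ha)). Qed.

Lemma H_eq_Hm1 a : H a = Hm 1 a.
Proof.
  unfold H, Hm. f_equal. apply functional_extensionality. intros k.
  now rewrite !pow_1.
Qed.

Lemma H_spec a : 0 <= a -> infinite_sum (fun k => / INR (S k) - / (INR (S k) + a)) (H a).
Proof.
  intros Ha. rewrite H_eq_Hm1.
  generalize (Hm_spec 1 a (le_n 1) Ha). apply infinite_sum_ext. intros k. now rewrite !pow_1.
Qed.

Lemma Hm_succ p a : (1 <= p)%nat -> 0 <= a -> Hm p (a + 1) = Hm p a + / (a + 1) ^ p.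
Proof.
  intros Hp Ha.
  pose proof (infinite_sum_minus _ _ _ _ (Hm_spec p (a + 1) Hp ltac:(lra)) (Hm_spec p a Hp Ha))
    as Hdiff.
  pose proof (infinite_sum_telescoping (fun n => / (INR n + (a + 1)) ^ p) 0
    (Un_cv_inv_pow_INR_plus _ _ Hp)) as Htel.
  enough (Hm p (a + 1) - Hm p a = / (INR 0 + (a + 1)) ^ p - 0) as E.
  { simpl INR in E. rewrite Rplus_0_l, Rminus_0_r in E. rewrite <- E. ring. }
  apply (uniqueness_sum _ _ _ Hdiff). revert Htel. apply infinite_sum_ext. intros k.
  replace (INR k + (a + 1)) with (INR (S k) + a) by (rewrite S_INR; ring).
  ring.
Qed.

Lemma H_succ a : 0 <= a -> H (a + 1) = H a + / (a + 1).
Proof. intros Ha. rewrite !H_eq_Hm1, Hm_succ, pow_1 by (auto; lia). reflexivity. Qed.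

Lemma Hm2_bounds b : 0 <= b -> 0 <= Hm 2 b <= zeta 2.
Proof.
  intros Hb.
  assert (Hterm : forall k, 0 <= / INR (S k) ^ 2 - / (INR (S k) + b) ^ 2 <= / INR (S k) ^ 2).
  { intros k. pose proof (INR_S_ge_1 k).
    assert (0 < / (INR (S k) + b) ^ 2) by (apply Rinv_0_lt_compat, pow_lt; lra).
    assert (/ (INR (S k) + b) ^ 2 <= / INR (S k) ^ 2)
      by (apply Rinv_le_contravar; [apply pow_lt | apply pow_incr]; lra).
    lra. }
  pose proof (Hm_spec 2 b ltac:(lia) Hb) as HHm.
  split.
  - apply (infinite_sum_le _ _ _ _ (fun k => proj1 (Hterm k)) infinite_sum_zero HHm).
  - apply (infinite_sum_le _ _ _ _ (fun k => proj2 (Hterm k)) HHm (zeta_spec 2 (le_n 2))).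
Qed.

Lemma sum_f_R0_consecutive_by_parts (a : nat -> R) N :
  sum_f_R0 (fun n => a (S n) / (INR (S n) * (INR (S n) + 1))) N =
  a O + sum_f_R0 (fun n => (a (S n) - a n) / INR (S n)) N - a (S N) / (INR (S N) + 1).
Proof.
  induction N as [|N IH].
  - simpl. field.
  - rewrite !tech5, IH. pose proof (INR_S_ge_1 N). rewrite (S_INR (S N)). field. lra.
Qed.

Lemma infinite_sum_inv_mul_sqr x :
  0 < x ->
  infinite_sum (fun n => / (INR (S n) * (INR (S n) + x) ^ 2))
    (/ x ^ 2 * H x - / x * (zeta 2 - Hm 2 x)).
Proof.
  intros Hx.
  generalize (infinite_sum_minus _ _ _ _ (infinite_sum_scal (/ x ^ 2) _ _ (H_spec x ltac:(lra)))
    (infinite_sum_scal (/ x) _ _ (infinite_sum_minus _ _ _ _ (zeta_spec 2 (le_n 2))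
      (Hm_spec 2 x ltac:(lia) ltac:(lra))))).
  apply infinite_sum_ext. intros n. pose proof (INR_S_ge_1 n). field. lra.
Qed.

Definition consecutive_Hm2_sum (x : R) : R :=
  Hm 2 x + / x ^ 2 * H x - / x * (zeta 2 - Hm 2 x).

Lemma infinite_sum_consecutive_Hm2 x :
  0 < x ->
  infinite_sum (fun n => Hm 2 (INR (S n) + x) / (INR (S n) * (INR (S n) + 1)))
    (consecutive_Hm2_sum x).
Proof.
  intros Hx.
  pose (a n := Hm 2 (INR n + x)).
  assert (Hjump : forall n, a (S n) - a n = / (INR (S n) + x) ^ 2).
  { intros n. unfold a. rewrite S_INR.
    replace (INR n + 1 + x) with (INR n + x + 1) by ring.
    pose proof (pos_INR n). rewrite Hm_succ by (lia || lra). ring. }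
  apply (Un_cv_ext (fun N => a O + sum_f_R0 (fun n => (a (S n) - a n) / INR (S n)) N
                             - a (S N) / (INR (S N) + 1))).
  { intros N. symmetry. apply (sum_f_R0_consecutive_by_parts a). }
  replace (consecutive_Hm2_sum x)
    with (Hm 2 x + (/ x ^ 2 * H x - / x * (zeta 2 - Hm 2 x)) - 0)
    by (unfold consecutive_Hm2_sum; ring).
  apply CV_minus; [apply CV_plus|].
  - unfold a. simpl INR. rewrite Rplus_0_l. apply Un_cv_const.
  - generalize (infinite_sum_inv_mul_sqr x Hx). apply infinite_sum_ext.
    intros n. rewrite Hjump. pose proof (INR_S_ge_1 n). field. lra.
  - apply (Un_cv_ext (fun n => a (S n) * / (INR n + 2))).
    { intros n. rewrite S_INR. unfold Rdiv. do 2 f_equal. ring. }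
    apply (Un_cv_bounded_mul_null _ _ (zeta 2)); [|apply Un_cv_inv_INR_plus].
    intros n. pose proof (INR_S_ge_1 n).
    destruct (Hm2_bounds (INR (S n) + x)) as [Hlo Hhi]; [lra|].
    unfold a. rewrite Rabs_right; lra.
Qed.

Lemma infinite_sum_consecutive_Hm2_tail x m :
  0 < x ->
  infinite_sum
    (fun n => Hm 2 (INR (S n) + INR m + x) / ((INR (S n) + INR m) * (INR (S n) + INR m + 1)))
    (consecutive_Hm2_sum x - sum1 m (fun j => Hm 2 (INR j + x) / (INR j * (INR j + 1)))).
Proof.
  intros Hx.
  generalize (infinite_sum_drop (fun j => Hm 2 (INR j + x) / (INR j * (INR j + 1))) _ m
    (infinite_sum_consecutive_Hm2 x Hx)).
  apply infinite_sum_ext. intros n. now rewrite <- plus_INR.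
Qed.

Definition Hm2_weighted (x : R) (m : nat) : R :=
  sum1 m (fun j => Hm 2 (INR j + x) / (INR j * (INR j + x))).

Definition H_weighted (x : R) (m : nat) : R :=
  sum1 m (fun j => H (INR j + x) / (INR j + x) ^ 2).

(* (k - r) times the right-hand side of the theorem is
   [antidifference (alpha - k) k - antidifference (alpha - r) r]. *)
Definition antidifference (x : R) (m : nat) : R :=
  x * Hm2_weighted x m - H_weighted x m
  - 2 * Hm 3 x + H x * zeta 2 - 2 * H x * Hm 2 x.

Lemma Hm2_weighted_succ x m :
  Hm2_weighted (x - 1) (S m) =
  Hm 2 x / x + sum1 m (fun j => Hm 2 (INR j + x) / ((INR j + 1) * (INR j + x))).
Proof.
  unfold Hm2_weighted. rewrite sum1_succ_l.
  replace (INR 1 + (x - 1)) with x by (simpl; ring). f_equal.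
  - simpl INR. f_equal. ring.
  - apply sum1_ext. intros j _.
    replace (INR (S j) + (x - 1)) with (INR j + x) by (rewrite S_INR; ring).
    now rewrite S_INR.
Qed.

Lemma H_weighted_succ x m : H_weighted (x - 1) (S m) = H x / x ^ 2 + H_weighted x m.
Proof.
  unfold H_weighted. rewrite sum1_succ_l.
  replace (INR 1 + (x - 1)) with x by (simpl; ring). f_equal.
  apply sum1_ext. intros j _.
  now replace (INR (S j) + (x - 1)) with (INR j + x) by (rewrite S_INR; ring).
Qed.

Lemma sum1_consecutive_partial_fraction f x m :
  -1 < x ->
  sum1 m (fun j => f j / (INR j * (INR j + 1))) =
  x * sum1 m (fun j => f j / (INR j * (INR j + x)))
  - (x - 1) * sum1 m (fun j => f j / ((INR j + 1) * (INR j + x))).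
Proof.
  intros Hx. induction m as [|m IH]; cbn [sum1]; [ring|].
  rewrite IH. pose proof (INR_S_ge_1 m). field. lra.
Qed.

Lemma antidifference_step x m :
  1 < x ->
  antidifference (x - 1) (S m) - antidifference x m =
  consecutive_Hm2_sum x - sum1 m (fun j => Hm 2 (INR j + x) / (INR j * (INR j + 1))).
Proof.
  intros Hx.
  assert (Hprev : 0 <= x - 1) by lra.
  pose proof (H_succ _ Hprev) as Hs1. pose proof (Hm_succ 2 _ ltac:(lia) Hprev) as Hs2.
  pose proof (Hm_succ 3 _ ltac:(lia) Hprev) as Hs3.
  replace (x - 1 + 1) with x in Hs1, Hs2, Hs3 by ring.
  pose proof (sum1_consecutive_partial_fraction (fun j => Hm 2 (INR j + x)) x m ltac:(lra))
    as Hpf.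
  unfold antidifference, consecutive_Hm2_sum.
  rewrite Hm2_weighted_succ, H_weighted_succ, Hpf. unfold Hm2_weighted.
  replace (H (x - 1)) with (H x - / x) by lra.
  replace (Hm 2 (x - 1)) with (Hm 2 x - / x ^ 2) by lra.
  replace (Hm 3 (x - 1)) with (Hm 3 x - / x ^ 3) by lra.
  field. lra.
Qed.

Lemma infinite_sum_Hm2_mul_diff_inv a r k :
  (r <= k)%nat -> INR k < a ->
  infinite_sum
    (fun n => Hm 2 (INR (S n) + a) * (/ (INR (S n) + INR r) - / (INR (S n) + INR k)))
    (antidifference (a - INR k) k - antidifference (a - INR r) r).
Proof.
  intros Hrk. induction Hrk as [|k Hrk IH]; intros Hka.
  - rewrite Rminus_diag. generalize infinite_sum_zero. apply infinite_sum_ext.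
    intros n. ring.
  - rewrite S_INR in Hka.
    pose proof (infinite_sum_plus _ _ _ _ (IH ltac:(lra))
      (infinite_sum_consecutive_Hm2_tail (a - INR k) k ltac:(lra))) as Hsum.
    rewrite <- antidifference_step in Hsum by lra.
    replace (a - INR k - 1) with (a - INR (S k)) in Hsum by (rewrite S_INR; ring).
    replace (antidifference (a - INR (S k)) (S k) - antidifference (a - INR r) r)
      with (antidifference (a - INR k) k - antidifference (a - INR r) r
            + (antidifference (a - INR (S k)) (S k) - antidifference (a - INR k) k))
      by ring.
    revert Hsum. apply infinite_sum_ext. intros n.
    replace (INR (S n) + INR k + (a - INR k)) with (INR (S n) + a) by ring.
    pose proof (INR_S_ge_1 n). pose proof (pos_INR r). pose proof (pos_INR k).
    rewrite (S_INR k). field. lra.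
Qed.

Lemma Hm2_weighted_eq a m :
  sum1 m (fun j => Hm 2 (a + INR j - INR m) / (INR j * (a + INR j - INR m))) =
  Hm2_weighted (a - INR m) m.
Proof.
  apply sum1_ext. intros j _.
  now replace (a + INR j - INR m) with (INR j + (a - INR m)) by ring.
Qed.

Lemma H_weighted_sub a r k :
  (r <= k)%nat ->
  sum1 (k - r) (fun j => H (a + INR j - INR k) / (a + INR j - INR k) ^ 2) =
  H_weighted (a - INR k) k - H_weighted (a - INR r) r.
Proof.
  intros Hrk. unfold H_weighted.
  pose proof (sum1_add (k - r) r (fun j => H (INR j + (a - INR k)) / (INR j + (a - INR k)) ^ 2))
    as Hsplit.
  rewrite (Nat.sub_add r k Hrk) in Hsplit.
  assert (Hhead :
    sum1 (k - r) (fun j => H (a + INR j - INR k) / (a + INR j - INR k) ^ 2) =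
    sum1 (k - r) (fun j => H (INR j + (a - INR k)) / (INR j + (a - INR k)) ^ 2)).
  { apply sum1_ext. intros j _.
    now replace (a + INR j - INR k) with (INR j + (a - INR k)) by ring. }
  assert (Htail :
    sum1 r (fun j => H (INR (k - r + j) + (a - INR k)) / (INR (k - r + j) + (a - INR k)) ^ 2) =
    sum1 r (fun j => H (INR j + (a - INR r)) / (INR j + (a - INR r)) ^ 2)).
  { apply sum1_ext. intros j _.
    now replace (INR (k - r + j) + (a - INR k)) with (INR j + (a - INR r))
      by (rewrite plus_INR, minus_INR by exact Hrk; ring). }
  rewrite Hsplit, Hhead, Htail. ring.
Qed.

Theorem theorem2p4 (r k : nat) (alpha : R)
  (hrk : (r < k)%nat) (hka : INR k < alpha) :
  infinite_sum
    (fun n => Hm 2 (INR (S n) + alpha) / ((INR (S n) + INR r) * (INR (S n) + INR k)))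
    (/ (INR k - INR r) *
      ( (INR r - alpha) *
          sum1 r (fun j => Hm 2 (alpha + INR j - INR r) / (INR j * (alpha + INR j - INR r)))
      - (INR k - alpha) *
          sum1 k (fun j => Hm 2 (alpha + INR j - INR k) / (INR j * (alpha + INR j - INR k)))
      - sum1 (k - r) (fun j => H (alpha + INR j - INR k) / (alpha + INR j - INR k) ^ 2)
      + 2 * Hm 3 (alpha - INR r)
      + H (alpha - INR k) * zeta 2
      + 2 * H (alpha - INR r) * Hm 2 (alpha - INR r)
      - 2 * Hm 3 (alpha - INR k)
      - H (alpha - INR r) * zeta 2
      - 2 * H (alpha - INR k) * Hm 2 (alpha - INR k) )).
Proof.
  assert (Hrk : INR r < INR k) by (apply lt_INR; exact hrk).
  rewrite !Hm2_weighted_eq, H_weighted_sub by lia.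
  replace (/ (INR k - INR r) * _) with
    (/ (INR k - INR r) *
       (antidifference (alpha - INR k) k - antidifference (alpha - INR r) r))
    by (unfold antidifference; ring).
  generalize (infinite_sum_scal (/ (INR k - INR r)) _ _
    (infinite_sum_Hm2_mul_diff_inv alpha r k ltac:(lia) hka)).
  apply infinite_sum_ext. intros n.
  pose proof (INR_S_ge_1 n). pose proof (pos_INR r). field. lra.
Qed.
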